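(* Let $k$ be a field of characteristic $p>0$. Let $\mathfrak{a}$ be a finite-dimensional restricted Lie algebra over $k$ with trivial Lie bracket $[a,a']=0$ and trivial $p$-map $a^{[p]}=0$, and let $\mathfrak{b}=ke$ be the one-dimensional restricted Lie algebra with $p$-map $(\lambda e)^{[p]}=\lambda^p e$. On the vector space $\mathfrak{g}=\mathfrak{a}\oplus\mathfrak{b}$ define the Lie bracket $[a+\lambda e,a'+\lambda' e]=\lambda a'-\lambda' a$ (the semidirect product $\mathfrak{a}\rtimes\mathfrak{b}$ for the homomorphism $\mathfrak{b}\to\mathfrak{gl}(\mathfrak{a})$, $e\mapsto \mathrm{id}_{\mathfrak{a}}$) and the map $(a+\lambda e)^{[p]}=\lambda^{p-1}(a+\lambda e)$ for $a,a'\in\mathfrak{a}$, $\lambda,\lambda'\in k$. Then this map is a $p$-map making $\mathfrak{g}$ a restricted Lie algebra such that the inclusions of $\mathfrak{a}$ and $\mathfrak{b}$ are homomorphisms of restricted Lie algebras; it is the unique $p$-map on the Lie algebra $\mathfrak{g}$ with this property; and every nonzero vector of $\mathfrak{g}$ is $p$-closed.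
   Context: A restricted Lie algebra over $k$ is a Lie algebra $\mathfrak{g}$ with a map $x\mapsto x^{[p]}$ satisfying $(\lambda x)^{[p]}=\lambda^p x^{[p]}$, $[x^{[p]},y]=(\mathrm{ad}_x)^p(y)$ and $(x+y)^{[p]}=x^{[p]}+y^{[p]}+\sum_{r=1}^{p-1}s_r(x,y)$, where $s_r$ are the usual universal Lie polynomials (Jacobson's formula). A vector $x\in\mathfrak{g}$ is called $p$-closed if $x\neq 0$ and $x^{[p]}\in kx$. *)

From HB Require Import structures.
From mathcomp Require Import all_boot all_order all_algebra.
Set Implicit Arguments. Unset Strict Implicit. Unset Printing Implicit Defensive.
Import GRing.Theory.
Local Open Scope ring_scope.

Section Restricted.
Variables (k : fieldType) (L : lmodType k).

Definition is_lie_bracket (br : L -> L -> L) : Prop :=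
  [/\ (forall (c : k) x y z, br (c *: x + y) z = c *: br x z + br y z),
      (forall (c : k) x y z, br x (c *: y + z) = c *: br x y + br x z),
      (forall x, br x x = 0) &
      (forall x y z, br x (br y z) + br y (br z x) + br z (br x y) = 0)].

Definition lie_word (br : L -> L -> L) (x y : L) (w : seq bool) : L :=
  foldr (fun b acc => br (if b then x else y) acc) x w.

(* Jacobson's universal Lie polynomial s_r(x,y): r s_r(x,y) is the coefficient
   of t^(r-1) in ad(t x + y)^(p-1)(x). *)
Definition jacobson_s (p r : nat) (br : L -> L -> L) (x y : L) : L :=
  (r%:R)^-1 *: \sum_(w : (p.-1).-tuple bool | count id w == r.-1)
                  lie_word br x y w.

Definition is_pmap (p : nat) (br : L -> L -> L) (pm : L -> L) : Prop :=
  [/\ (forall (c : k) x, pm (c *: x) = c ^+ p *: pm x),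
      (forall x y, br (pm x) y = iter p (br x) y) &
      (forall x y, pm (x + y) = pm x + pm y + \sum_(1 <= r < p) jacobson_s p r br x y)].

Definition is_restricted_lie (p : nat) (br : L -> L -> L) (pm : L -> L) : Prop :=
  is_lie_bracket br /\ is_pmap p br pm.

Definition p_closed (pm : L -> L) (x : L) : Prop :=
  x != 0 /\ exists c : k, pm x = c *: x.

End Restricted.

Definition is_restricted_hom (k : fieldType) (A B : lmodType k)
  (brA : A -> A -> A) (pmA : A -> A) (brB : B -> B -> B) (pmB : B -> B)
  (f : A -> B) : Prop :=
  [/\ (forall (c : k) x y, f (c *: x + y) = c *: f x + f y),
      (forall x y, f (brA x y) = brB (f x) (f y)) &
      (forall x, f (pmA x) = pmB (f x))].

(* The semidirect product g = a x| k e, a = V with trivial bracket and p-map,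
   elements written as pairs (a, lambda) meaning a + lambda e. *)
Section Semidirect.
Variables (k : fieldType) (V : vectType k).

Definition sd_g := (V * k^o)%type.

Definition sd_br (x y : sd_g) : sd_g :=
  (x.2 *: y.1 - y.2 *: x.1, 0).

Definition sd_pm (p : nat) (x : sd_g) : sd_g := (x.2 ^+ p.-1) *: x.

Definition a_br (x y : V) : V := 0.
Definition a_pm (x : V) : V := 0.
Definition b_br (x y : k^o) : k^o := 0.
Definition b_pm (p : nat) (x : k^o) : k^o := x ^+ p.

Definition incl_a (a : V) : sd_g := (a, 0).
Definition incl_b (l : k^o) : sd_g := (0, l).
End Semidirect.

(* The bracket of g takes values in a, and ad x acts on a as multiplication
   by the e-coordinate x.2.  Hence every Lie word occurring in Jacobson's
   formula is a scalar multiple of [y, x], and in characteristic p the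
   identity 'C(p-2, i) / (i+1) = (-1)^i turns the whole Jacobson sum into
   J(x.2, y.2) [y, x] with J(a, b) = sum_i (-a)^i b^(p-2-i).  The same J
   appears when (a + b)^(p-1) is expanded using 'C(p-1, i) = (-1)^i, which
   gives the additivity axiom for x |-> x.2^(p-1) x.  Uniqueness holds because
   the Jacobson formula determines a p-map on a + b from its values on a and
   on b, where the homomorphism conditions fix it. *)

From HB Require Import structures.
From mathcomp Require Import all_boot all_order all_algebra.
From mathcomp Require Import ring.
Import GRing.Theory.
Local Open Scope ring_scope.
Set Implicit Arguments. Unset Strict Implicit.

Section PcharBinomial.
Variables (R : comNzRingType) (p : nat).
Hypothesis pcharRp : p \in [pchar R].

Let p_gt0 : (0 < p)%N. Proof. exact: prime_gt0 (pcharf_prime pcharRp). Qed.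

Lemma pchar_bin_pred i : (i < p)%N -> 'C(p.-1, i)%:R = (-1) ^+ i :> R.
Proof.
elim: i => [|i IHi] lt_ip; first by rewrite bin0 expr0.
have /eqP : 'C(p, i.+1)%:R = 0 :> R by rewrite bin_lt_pcharf_0.
rewrite -{1}(prednK p_gt0) binS natrD (IHi (ltnW lt_ip)) addr_eq0 => /eqP ->.
by rewrite exprS mulN1r.
Qed.

Lemma exprD_pred_pchar (a b : R) :
  (a + b) ^+ p.-1 = \sum_(i < p) (- a) ^+ i * b ^+ (p.-1 - i).
Proof.
rewrite addrC exprDn prednK //; apply: eq_bigr => i _.
by rewrite exprNn -mulr_natr pchar_bin_pred // mulrC [b ^+ _ * _]mulrC mulrA.
Qed.

Lemma pchar_bin_pred2 i :
  (i < p.-1)%N -> 'C(p.-2, i)%:R = (-1) ^+ i * i.+1%:R :> R.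
Proof.
move=> lt_ip; have pred_p : p.-1%:R = -1 :> R.
  by apply/eqP; rewrite -addr_eq0 natr1 prednK // pcharf0.
have /(congr1 (GRing.natmul (1 : R))) := mul_bin_diag p.-1 i.
rewrite !natrM pred_p pchar_bin_pred -?ltn_predRL // mulN1r exprS.
by move/eqP; rewrite eqr_oppLR => /eqP ->; ring.
Qed.

(* In characteristic p, jacobson_coef a b * (a + b) = b^(p-1) - a^(p-1). *)
Definition jacobson_coef (a b : R) : R :=
  \sum_(i < p.-1) (- a) ^+ i * b ^+ (p.-2 - i).

Lemma exprD_pred_jacobson_coefl (a b : R) :
  (a + b) ^+ p.-1 = a ^+ p.-1 + jacobson_coef a b * b.
Proof.
rewrite exprD_pred_pchar -(prednK p_gt0) big_ord_recr /= subnn expr0 mulr1.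
rewrite exprNn -pchar_bin_pred ?prednK // binn mul1r addrC /jacobson_coef.
congr (_ + _); rewrite mulr_suml; apply: eq_bigr => i _.
have lt_i_pS := ltn_predK (ltn_ord i).
by rewrite -mulrA -exprSr -subSn ?lt_i_pS // -ltnS lt_i_pS.
Qed.

Lemma exprD_pred_jacobson_coefr (a b : R) :
  (a + b) ^+ p.-1 = b ^+ p.-1 - a * jacobson_coef a b.
Proof.
rewrite exprD_pred_pchar -(prednK p_gt0) big_ord_recl /= expr0 mul1r subn0.
congr (_ + _); rewrite /jacobson_coef mulr_sumr -sumrN; apply: eq_bigr => i _.
by rewrite /bump add1n subnS predn_sub exprS !mulNr mulrA.
Qed.

End PcharBinomial.

Lemma big_tuple_cons (R : nmodType) (T : finType) n (P : pred (seq T))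
    (F : seq T -> R) :
  \sum_(w : n.+1.-tuple T | P w) F w =
  \sum_(t : T) \sum_(w : n.-tuple T | P (t :: w)) F (t :: w).
Proof.
have cons_bij : bijective (fun tw : T * n.-tuple T => [tuple of tw.1 :: tw.2]).
  exists (fun w : n.+1.-tuple T => (thead w, [tuple of behead w])).
    by case=> t w; congr pair; apply: val_inj.
  by move=> w; rewrite [in RHS](tuple_eta w); apply: val_inj.
rewrite (reindex _ (onW_bij _ cons_bij)) /=.
by rewrite (pair_big_dep xpredT (fun t (w : n.-tuple T) => P (t :: w))).
Qed.

Section LieBracket.
Variables (k : fieldType) (L : lmodType k) (br : L -> L -> L).
Hypothesis brZDr : forall c x y z, br x (c *: y + z) = c *: br x y + br x z.

Lemma lie_brDr x y z : br x (y + z) = br x y + br x z.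
Proof. by rewrite -[y]scale1r brZDr !scale1r. Qed.

Lemma lie_br0r x : br x 0 = 0.
Proof. by apply: (addrI (br x 0)); rewrite -lie_brDr !addr0. Qed.

Lemma lie_brZr c x y : br x (c *: y) = c *: br x y.
Proof. by rewrite -[c *: y]addr0 brZDr lie_br0r addr0. Qed.

Lemma lie_br_sumr x (I : finType) (P : pred I) (F : I -> L) :
  br x (\sum_(i | P i) F i) = \sum_(i | P i) br x (F i).
Proof. exact: (big_morph _ (lie_brDr x) (lie_br0r x)). Qed.

Definition lie_word_sum (x y : L) (n m : nat) : L :=
  \sum_(w : n.-tuple bool | count id w == m) lie_word br x y w.

Lemma jacobson_sE p r x y :
  jacobson_s p r br x y = r%:R^-1 *: lie_word_sum x y p.-1 r.-1.
Proof. by []. Qed.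

Lemma lie_word_sum0 x y m : lie_word_sum x y 0 m = if m == 0%N then x else 0.
Proof.
rewrite /lie_word_sum; case: m => [|m] /=; last first.
  by rewrite big_pred0 // => w; rewrite tuple0.
rewrite (eq_bigl (pred1 [tuple])) ?big_pred1_eq // => w.
by rewrite [w]tuple0; symmetry; exact: eqxx.
Qed.

Lemma lie_word_sumS x y n m :
  lie_word_sum x y n.+1 m =
  (if m is m'.+1 then br x (lie_word_sum x y n m') else 0) +
  br y (lie_word_sum x y n m).
Proof.
rewrite /lie_word_sum (big_tuple_cons _ (fun w => count id w == m)) big_bool /=.
rewrite lie_br_sumr; congr (_ + _).
case: m => [|m]; first by rewrite big_pred0.
by rewrite lie_br_sumr.
Qed.

End LieBracket.

Lemma pmapD_eq (k : fieldType) (L : lmodType k) p (br : L -> L -> L)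
    (pm1 pm2 : L -> L) x y :
  is_pmap p br pm1 -> is_pmap p br pm2 -> pm1 x = pm2 x -> pm1 y = pm2 y ->
  pm1 (x + y) = pm2 (x + y).
Proof. by move=> [_ _ pm1D] [_ _ pm2D] eq_x eq_y; rewrite pm1D pm2D eq_x eq_y. Qed.

Section Semidirect.
Variables (k : fieldType) (V : vectType k).
Implicit Types x y z : sd_g V.

Lemma sd_br_anti x y : sd_br y x = - sd_br x y.
Proof. by rewrite /sd_br; congr pair; rewrite /= ?opprB ?oppr0. Qed.

Lemma sd_brZDr c x y z : sd_br x (c *: y + z) = c *: sd_br x y + sd_br x z.
Proof.
rewrite /sd_br; congr pair; rewrite /= ?scaler0 ?addr0 //.
by rewrite scalerDr scalerDl scalerBr !scalerA mulrC opprD addrACA.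
Qed.

Lemma sd_brZDl c x y z : sd_br (c *: x + y) z = c *: sd_br x z + sd_br y z.
Proof. by rewrite sd_br_anti sd_brZDr opprD -scalerN -!sd_br_anti. Qed.

Lemma sd_br_br z x y : sd_br z (sd_br x y) = z.2 *: sd_br x y.
Proof. by apply: injective_projections; rewrite /= ?scale0r ?subr0 ?scaler0. Qed.

Lemma sd_br_lie : is_lie_bracket (@sd_br k V).
Proof.
split; [exact: sd_brZDl | exact: sd_brZDr | by move=> x; rewrite /sd_br subrr |].
move=> x y z; rewrite !sd_br_br.
apply: injective_projections; rewrite /= ?scaler0 ?addr0 //.
rewrite !scalerBr !scalerA (mulrC y.2 x.2) (mulrC z.2 x.2) (mulrC z.2 y.2).
by rewrite [_ - _ + (_ - _)]addrC !subrKA subrr.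
Qed.

Lemma iter_sd_br x y m : iter m.+1 (sd_br x) y = x.2 ^+ m *: sd_br x y.
Proof.
elim: m => [|m IHm]; first by rewrite expr0 scale1r.
by rewrite iterS IHm (lie_brZr sd_brZDr) sd_br_br scalerA -exprSr.
Qed.

Lemma lie_word_sum_sd x y n m :
  lie_word_sum (@sd_br k V) x y n.+1 m =
  ('C(n, m)%:R * (x.2 ^+ m * y.2 ^+ (n - m))) *: sd_br y x.
Proof.
have brZr := lie_brZr sd_brZDr; have br0r := lie_br0r sd_brZDr.
elim: n m => [|n IHn] m; rewrite (lie_word_sumS sd_brZDr).
  case: m => [|[|m]]; rewrite !lie_word_sum0 /=.
  - by rewrite add0r bin0 !expr0 !mulr1 scale1r.
  - by rewrite br0r addr0 /sd_br subrr bin0n mul0r scale0r.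
  - by rewrite !br0r addr0 bin0n mul0r scale0r.
case: m => [|m]; rewrite !IHn !brZr !sd_br_br !scalerA.
  by rewrite add0r !bin0 !subn0 expr0 exprSr !mul1r.
rewrite -scalerDl binS natrD subSS; congr (_ *: _).
have [lt_mn | le_nm] := ltnP m n.
  by rewrite -(subnSK lt_mn) (exprS x.2 m) (exprS y.2 (n - m.+1)); ring.
by rewrite (@bin_small n m.+1) ?ltnS // (exprS x.2 m); ring.
Qed.

Variable p : nat.
Hypothesis pcharkp : p \in [pchar k].

Let p_gt1 : (1 < p)%N. Proof. exact: prime_gt1 (pcharf_prime pcharkp). Qed.
Let p_gt0 : (0 < p)%N. Proof. exact: ltnW p_gt1. Qed.

Lemma sd_jacobson_sum x y :
  \sum_(1 <= r < p) jacobson_s p r (@sd_br k V) x y =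
  jacobson_coef p x.2 y.2 *: sd_br y x.
Proof.
rewrite big_add1 big_mkord /jacobson_coef scaler_suml; apply: eq_bigr => -[i lt_i] _ /=.
have lt_ip : (i.+1 < p)%N by rewrite -ltn_predRL.
have i1_neq0 : i.+1%:R != 0 :> k by rewrite -(dvdn_pcharf pcharkp) gtnNdvd.
rewrite jacobson_sE -(ltn_predK lt_i) lie_word_sum_sd scalerA /=.
rewrite (pchar_bin_pred2 pcharkp lt_i) [(-1) ^+ i * _]mulrC -!mulrA mulKf //.
by rewrite mulrA -exprNn.
Qed.

Lemma sd_pmD x y :
  sd_pm p (x + y) =
  sd_pm p x + sd_pm p y + jacobson_coef p x.2 y.2 *: sd_br y x.
Proof.
case: x y => [a s] [b t]; apply: injective_projections => /=.
  rewrite scalerDr {1}(exprD_pred_jacobson_coefl pcharkp).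
  rewrite (exprD_pred_jacobson_coefr pcharkp).
  rewrite !scalerDl scaleNr scalerBr !scalerA (mulrC s).
  by rewrite addrACA.
rewrite scaler0 addr0.
change ((s + t) ^+ p.-1 * (s + t) = s ^+ p.-1 * s + t ^+ p.-1 * t).
by rewrite -!exprSr prednK // -!(pFrobenius_autE pcharkp) rmorphD.
Qed.

Lemma sd_pmZ c x : sd_pm p (c *: x) = c ^+ p *: sd_pm p x.
Proof.
rewrite /sd_pm !scalerA; congr (_ *: _).
by rewrite /= exprMn mulrAC -exprSr prednK.
Qed.

Lemma sd_brZl c x y : sd_br (c *: x) y = c *: sd_br x y.
Proof. by rewrite sd_br_anti (lie_brZr sd_brZDr) -scalerN -sd_br_anti. Qed.

Lemma sd_pm_ad x y : sd_br (sd_pm p x) y = iter p (sd_br x) y.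
Proof. by rewrite /sd_pm sd_brZl -(prednK p_gt0) iter_sd_br. Qed.

Lemma sd_pm_is_pmap : is_pmap p (@sd_br k V) (sd_pm p).
Proof.
split; [exact: sd_pmZ | exact: sd_pm_ad |].
by move=> x y; rewrite sd_jacobson_sum sd_pmD.
Qed.

Lemma sd_restricted_lie : is_restricted_lie p (@sd_br k V) (sd_pm p).
Proof. split; [exact: sd_br_lie | exact: sd_pm_is_pmap]. Qed.

Lemma incl_a_restricted_hom :
  is_restricted_hom (@a_br k V) (@a_pm k V) (@sd_br k V) (sd_pm p) (@incl_a k V).
Proof.
split=> *; apply: injective_projections; rewrite /= ?scaler0 ?scale0r ?addr0 ?subr0 //.
by rewrite expr0n eqn0Ngt -ltnS prednK // p_gt1 scale0r.
Qed.

Lemma incl_b_restricted_hom :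
  is_restricted_hom (@b_br k) (b_pm p) (@sd_br k V) (sd_pm p) (@incl_b k V).
Proof.
split=> *; apply: injective_projections;
  by rewrite /= ?scaler0 ?addr0 ?subr0 // /b_pm -{1}(prednK p_gt0) exprSr.
Qed.

Lemma sd_pm_unique pm :
  is_pmap p (@sd_br k V) pm ->
  (forall a, incl_a (a_pm a) = pm (incl_a a)) ->
  (forall l, incl_b V (b_pm p l) = pm (incl_b V l)) ->
  pm =1 sd_pm p.
Proof.
move=> pm_pmap pm_a pm_b [a l].
have -> : (a, l) = incl_a a + incl_b V l.
  by apply: injective_projections; rewrite /= ?addr0 ?add0r.
have [_ _ sd_pm_a] := incl_a_restricted_hom.
have [_ _ sd_pm_b] := incl_b_restricted_hom.
apply: (pmapD_eq pm_pmap sd_pm_is_pmap).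
- by rewrite -pm_a sd_pm_a.
- by rewrite -pm_b sd_pm_b.
Qed.

End Semidirect.

Theorem proposition1p1 (k : fieldType) (p : nat) (hp : p \in [pchar k])
    (V : vectType k) :
  [/\ is_restricted_lie p (@sd_br k V) (@sd_pm k V p),
      is_restricted_hom (@a_br k V) (@a_pm k V) (@sd_br k V) (@sd_pm k V p) (@incl_a k V),
      is_restricted_hom (@b_br k) (@b_pm k p) (@sd_br k V) (@sd_pm k V p) (@incl_b k V),
      (forall pm' : sd_g V -> sd_g V,
          is_restricted_lie p (@sd_br k V) pm' ->
          is_restricted_hom (@a_br k V) (@a_pm k V) (@sd_br k V) pm' (@incl_a k V) ->
          is_restricted_hom (@b_br k) (@b_pm k p) (@sd_br k V) pm' (@incl_b k V) ->
          forall x, pm' x = sd_pm p x) &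
      (forall x : sd_g V, x != 0 -> p_closed (@sd_pm k V p) x)].
Proof.
split.
- exact: sd_restricted_lie.
- exact: incl_a_restricted_hom.
- exact: incl_b_restricted_hom.
- by move=> pm [_ pm_pmap] [_ _ pm_a] [_ _ pm_b]; exact: sd_pm_unique.
- by move=> x x_neq0; split; last exists (x.2 ^+ p.-1).
Qed.
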